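(* In Mahi-Mahi with wave length $w=4$: for every round $r$, there exists a block $b$ of round $r$ that has at least $2f+1$ certificates in round $r+3$.
   Context: There are $n=3f+1$ validators, at most $f$ Byzantine; every honest validator creates exactly one block in every round. Every valid block of round $r$ has as parents at least $2f+1$ blocks of round $r-1$ from distinct validators. A block $b$ of round $r'$ is a vote for a block $L$ of round $r<r'$ with author $a$ if the first block with author $a$ and round $r$ encountered in the deterministic depth-first search from $b$ along parent references is $L$. With wave length $4$, a block $c$ of round $r+3$ is a certificate for a block $L$ of round $r$ if at least $2f+1$ of $c$'s parents (blocks of round $r+2$) are votes for $L$. *)

From mathcomp Require Import all_boot.
Set Implicit Arguments. Unset Strict Implicit. Unset Printing Implicit Defensive.

(* Since parents always have strictly smaller
   rounds, fuel [round b].+1 suffices to explore the whole sub-DAG. *)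
Fixpoint dfs_fuel (B : Type) (parents : B -> seq B) (fuel : nat) (b : B) : seq B :=
  match fuel with
  | 0 => [:: b]
  | k.+1 => b :: flatten [seq dfs_fuel parents k p | p <- parents b]
  end.

Definition dfs (B : Type) (round : B -> nat) (parents : B -> seq B) (b : B) : seq B :=
  dfs_fuel parents (round b).+1 b.

Definition vote (V B : eqType) (author : B -> V) (round : B -> nat)
    (parents : B -> seq B) (b L : B) : bool :=
  (round L < round b) &&
  (ohead [seq x <- dfs round parents b |
            (author x == author L) && (round x == round L)] == Some L).

Definition certificate (f : nat) (V B : eqType) (author : B -> V)
    (round : B -> nat) (parents : B -> seq B) (c L : B) : bool :=
  (round c == round L + 3) &&
  (2 * f + 1 <= count (fun p => (round p == round L + 2) &&
                                vote author round parents p L)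
                      (undup (parents c))).

From Pilot Require Import Defs.
From mathcomp Require Import all_boot zify.

Set Implicit Arguments.
Unset Strict Implicit.
Unset Printing Implicit Defensive.

(* Every honest block of round r+1 references the round-r blocks of all but
   at most f honest validators, so by double counting some honest block L of
   round r is referenced by the round-(r+1) blocks of all but at most f honest
   validators.  Any block y of round r+2 also references the round-(r+1)
   blocks of all but at most f honest validators; as there are more than 2f
   honest validators, one of these references L, so L is found at depth two of
   the DFS from y.  Since L is the only block of its honest author in round r,
   y votes for L.  Hence every block of round r+3 is a certificate for L, and
   the at least 2f+1 honest blocks of round r+3 are the certificates sought. *)

Lemma double_count (T : finType) (A : {set T}) (S : T -> {set T}) :
  \sum_(v in A) #|A :&: S v| = \sum_(a in A) #|[set v in A | a \in S v]|.
Proof.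
have cardE (P : pred T) : #|[set x in A | P x]| = \sum_(x in A) P x.
  by rewrite -sum1dep_card big_mkcondr; apply: eq_bigr => x _; case: (P x).
rewrite (eq_bigr (fun v => \sum_(a in A) (a \in S v))) => [|v _]; last first.
  by rewrite -cardE; apply: eq_card => a; rewrite !inE.
by rewrite exchange_big; apply: eq_bigr => a _; rewrite cardE.
Qed.

Lemma incidence_pigeonhole (T : finType) (A : {set T}) (S : T -> {set T}) k :
  A != set0 -> (forall v, v \in A -> k <= #|A :&: S v|) ->
  exists2 a, a \in A & k <= #|[set v in A | a \in S v]|.
Proof.
move=> /set0Pn [v0 v0A] large; apply/exists_inP; apply: contraT.
rewrite negb_exists_in => /forall_inP small.
have lo : #|A| * k <= \sum_(a in A) #|[set v in A | a \in S v]|.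
  by rewrite -double_count -sum_nat_const leq_sum.
have hi : \sum_(a in A) #|[set v in A | a \in S v]| <= #|A| * k.-1.
  by rewrite -sum_nat_const leq_sum // => a /small; rewrite -ltnNge; lia.
have A_gt0 : 0 < #|A| by apply/card_gt0P; exists v0.
have := small v0 v0A; rewrite -ltnNge; nia.
Qed.

Lemma card_setI_gt0 (T : finType) (H A C : {set T}) :
  A \subset H -> C \subset H -> #|H| < #|A| + #|C| -> 0 < #|A :&: C|.
Proof.
move=> AH CH; rewrite -cardsUI.
have : #|A :|: C| <= #|H| by apply: subset_leq_card; rewrite subUset AH CH.
lia.
Qed.

Lemma size_undup_map_le (T1 T2 : eqType) (g : T1 -> T2) (s : seq T1) :
  size (undup (map g s)) <= size (undup s).
Proof.
rewrite -(size_map g); apply: uniq_leq_size; first exact: undup_uniq.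
by move=> y; rewrite mem_undup => /mapP [x xs ->]; rewrite map_f ?mem_undup.
Qed.

Lemma mem_dfs_fuel_self (B : eqType) (parents : B -> seq B) k b :
  b \in dfs_fuel parents k b.
Proof. by case: k => [|k]; rewrite mem_head. Qed.

Lemma mem_dfs_fuel_parent (B : eqType) (parents : B -> seq B) k b p x :
  p \in parents b -> x \in dfs_fuel parents k p ->
  x \in dfs_fuel parents k.+1 b.
Proof.
by move=> pb xp; rewrite inE; apply/orP; right; apply/flatten_mapP; exists p.
Qed.

Lemma vote_of_mem_dfs (V B : eqType) (author : B -> V) (round : B -> nat)
    (parents : B -> seq B) (b L : B) :
  round L < round b -> L \in Defs.dfs round parents b ->
  (forall x, author x = author L -> round x = round L -> x = L) ->
  vote author round parents b L.
Proof.
move=> Lb L_dfs L_unique; rewrite /vote Lb andTb.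
set s := filter _ _.
have : L \in s by rewrite mem_filter !eqxx L_dfs.
have : all (pred1 L) s.
  by apply/allP => x; rewrite mem_filter => /andP [/andP [/eqP ? /eqP ?] _];
    apply/eqP/L_unique.
by case: s => [//|x s'] /= /andP [/eqP -> _].
Qed.

Section MahiMahi.

Variables (f : nat) (B : eqType) (author : B -> 'I_(3 * f + 1)).
Variables (round : B -> nat) (parents : B -> seq B).
Variable honest : {set 'I_(3 * f + 1)}.

Hypothesis byzantine_le : #|~: honest| <= f.
Hypothesis honest_block : forall (v : 'I_(3 * f + 1)) (r : nat),
  v \in honest -> exists! b : B, author b = v /\ round b = r.
Hypothesis parents_quorum : forall b : B, 0 < round b ->
  2 * f + 1 <= size (undup [seq author p | p <- parents b &
                                             round p == (round b).-1]).

Lemma card_honest : #|honest| + #|~: honest| = 3 * f + 1.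
Proof. by rewrite cardsC card_ord. Qed.

Lemma quorum_le_card_honest : 2 * f + 1 <= #|honest|.
Proof. by have := card_honest; lia. Qed.

Lemma honest_eq_block x y :
  author x \in honest -> author x = author y -> round x = round y -> x = y.
Proof.
move=> hx axy rxy; have [b [_ b_unique]] := honest_block (round x) hx.
by rewrite -(b_unique x) // -(b_unique y).
Qed.

Definition round_selection (g : 'I_(3 * f + 1) -> B) r :=
  forall v, v \in honest -> author (g v) = v /\ round (g v) = r.

Lemma round_selection_exists r : exists g, round_selection g r.
Proof.
have [v0 v0h] : exists v0, v0 \in honest.
  by apply/card_gt0P; have := quorum_le_card_honest; lia.
have [b0 _] := honest_block 0 v0h.
apply: (fin_all_exists (P := fun v b => v \in honest ->
                                        author b = v /\ round b = r)) => v.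
case: (boolP (v \in honest)) => vh; last by exists b0.
by have [b [br _]] := honest_block r vh; exists b.
Qed.

Definition prev_authors (b : B) : {set 'I_(3 * f + 1)} :=
  [set a in [seq author p | p <- parents b & round p == (round b).-1]].

Lemma card_honest_prev_authors b :
  0 < round b -> #|honest| <= #|prev_authors b :&: honest| + f.
Proof.
move=> b_pos; have quorum : 2 * f + 1 <= #|prev_authors b|.
  rewrite cardsE -(eq_card (mem_undup _)) (card_uniqP (undup_uniq _)).
  exact: parents_quorum.
have := cardsID honest (prev_authors b).
have : #|prev_authors b :\: honest| <= #|~: honest|.
  by apply: subset_leq_card; rewrite setDE subsetIr.
by have := card_honest; lia.
Qed.

Lemma selection_mem_parents g b a :
  round_selection g (round b).-1 -> a \in prev_authors b :&: honest ->
  g a \in parents b.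
Proof.
move=> gP; rewrite !inE => /andP [/mapP [p]].
rewrite mem_filter => /andP [/eqP rp pb] -> ah.
have [ga gr] := gP _ ah.
by rewrite (@honest_eq_block (g (author p)) p) ?ga ?gr.
Qed.

Lemma honest_grandparent_of_all r : exists L, [/\ round L = r,
  author L \in honest &
  forall y, round y = r + 2 -> exists2 p, p \in parents y & L \in parents p].
Proof.
have [g0 g0P] := round_selection_exists r.
have [g1 g1P] := round_selection_exists r.+1.
have [a ah popular] : exists2 a, a \in honest &
    #|honest| - f <= #|[set v in honest | a \in prev_authors (g1 v)]|.
  apply: incidence_pigeonhole => [|v vh].
    by rewrite -card_gt0; have := quorum_le_card_honest; lia.
  have [_ g1v] := g1P v vh.
  by rewrite setIC; have := @card_honest_prev_authors (g1 v); rewrite g1v; lia.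
have [g0a g0r] := g0P a ah.
exists (g0 a); split; rewrite ?g0a // => y ry.
have [v] : exists v, v \in (prev_authors y :&: honest) :&:
                           [set v in honest | a \in prev_authors (g1 v)].
  apply/card_gt0P; apply: (@card_setI_gt0 _ honest).
  - exact: subsetIr.
  - by apply/subsetP => v; rewrite inE => /andP [].
  have := @card_honest_prev_authors y; have := quorum_le_card_honest.
  by rewrite ry; lia.
rewrite in_setI => /andP [v_prev]; rewrite inE => /andP [vh a_prev].
have [_ g1v] := g1P v vh.
exists (g1 v).
  by apply: selection_mem_parents v_prev; rewrite ry addn2.
by apply: selection_mem_parents; rewrite ?g1v // in_setI a_prev ah.
Qed.

Lemma unanimously_voted_block r : exists L, round L = r /\
  forall y, round y = r + 2 -> vote author round parents y L.
Proof.
have [L [rL Lh grandparent]] := honest_grandparent_of_all r.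
exists L; split => // y ry; have [p py Lp] := grandparent y ry.
apply: vote_of_mem_dfs; first by rewrite ry rL addn2.
  rewrite /Defs.dfs ry addn2.
  by apply/(mem_dfs_fuel_parent py)/(mem_dfs_fuel_parent Lp)/mem_dfs_fuel_self.
by move=> x ax rx; apply: honest_eq_block; rewrite ?ax.
Qed.

Lemma certificate_of_votes c L :
  round c = round L + 3 ->
  (forall p, p \in parents c -> round p = round L + 2 ->
     vote author round parents p L) ->
  certificate f author round parents c L.
Proof.
move=> rc votes; rewrite /certificate rc eqxx /=.
rewrite (@eq_in_count _ _ (fun p => round p == round L + 2)); last first.
  move=> p; rewrite mem_undup => pc /=.
  by case: eqP => //= rp; apply: votes.
have := @parents_quorum c; rewrite rc addn3 addn2 => /(_ isT) /leq_trans; apply.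
by rewrite -size_filter filter_undup size_undup_map_le.
Qed.

Lemma unanimously_certified_block r : exists L, round L = r /\
  forall c, round c = r + 3 -> certificate f author round parents c L.
Proof.
have [L [rL voted]] := unanimously_voted_block r.
exists L; split => // c rc; apply: certificate_of_votes; first by rewrite rL.
by move=> p _ rp; apply: voted; rewrite -rL.
Qed.

Lemma honest_round_quorum r : exists cs : seq B,
  [/\ uniq cs, 2 * f + 1 <= size cs & all (fun c => round c == r) cs].
Proof.
have [g gP] := round_selection_exists r.
exists [seq g v | v <- enum honest]; split.
- rewrite map_inj_in_uniq ?enum_uniq // => v w; rewrite !mem_enum => vh wh gvw.
  by rewrite -(proj1 (gP v vh)) gvw (proj1 (gP w wh)).
- by rewrite size_map -cardE quorum_le_card_honest.
- apply/allP => c /mapP [v]; rewrite mem_enum => vh ->.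
  by rewrite (proj2 (gP v vh)).
Qed.

End MahiMahi.

Theorem lemma15 (f : nat) (B : eqType)
    (author : B -> 'I_(3 * f + 1)) (round : B -> nat) (parents : B -> seq B)
    (honest : {set 'I_(3 * f + 1)}) :
  (* at most f Byzantine validators *)
  #|~: honest| <= f ->
  (* every honest validator creates exactly one block in every round *)
  (forall (v : 'I_(3 * f + 1)) (r : nat), v \in honest ->
     exists! b : B, author b = v /\ round b = r) ->
  (* parent references point to strictly earlier rounds *)
  (forall b p : B, p \in parents b -> round p < round b) ->
  (* every block of round r >= 1 has as parents at least 2f+1 blocks of
     round r-1 from distinct validators *)
  (forall b : B, 0 < round b ->
     2 * f + 1 <= size (undup [seq author p | p <- parents b &
                                                round p == (round b).-1])) ->
  forall r : nat, exists b : B, round b = r /\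
    exists cs : seq B, [/\ uniq cs, 2 * f + 1 <= size cs &
      all (fun c => certificate f author round parents c b) cs].
Proof.
move=> byzantine_le honest_block _ parents_quorum r.
have [L [rL certL]] :=
  unanimously_certified_block byzantine_le honest_block parents_quorum r.
have [cs [uniq_cs size_cs round_cs]] :=
  honest_round_quorum byzantine_le honest_block (r + 3).
exists L; split => //; exists cs; split => //.
by apply/allP => c /(allP round_cs) /eqP /certL.
Qed.
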